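(* Let $\mathbf{J}=(J_{ij})\in\mathbb{R}^{n\times n}$ be a real symmetric matrix with zero diagonal, let $\alpha>0$, and let $\beta$ satisfy $$\beta\ \ge\ \|\mathbf{J}+\alpha\mathbf{I}\|_\infty=\max_{1\le i\le n}\Big(\alpha+\sum_{j\ne i}|J_{ij}|\Big).$$ Let $\boldsymbol{x}^{(0)}\in\mathbb{R}^n$ be arbitrary and define $\boldsymbol{x}^{(k+1)}=\mathcal{T}(\boldsymbol{x}^{(k)})$ for $k\ge0$, where $\mathcal{T}(\boldsymbol{x})=\varphi(\beta^{-1}(\mathbf{J}+\alpha\mathbf{I})\boldsymbol{x})$ and $\varphi(z_1,\dots,z_n)=(\sqrt[3]{z_1},\dots,\sqrt[3]{z_n})$ (real cube roots). Then the sequence $\{\boldsymbol{x}^{(k)}\}$ is bounded. *)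

From HB Require Import structures.
From mathcomp Require Import all_boot all_order all_algebra.
From mathcomp Require Import all_classical all_reals exp.
Set Implicit Arguments. Unset Strict Implicit. Unset Printing Implicit Defensive.
Import Order.TTheory GRing.Theory Num.Theory.
Local Open Scope ring_scope.

Definition cbrt (R : realType) (z : R) : R := Num.sg z * (`|z| `^ (3%:R)^-1).

Definition phi (R : realType) (n : nat) (z : 'cV[R]_n) : 'cV[R]_n :=
  \col_i cbrt (z i 0).

Definition Tmap (R : realType) (n : nat) (J : 'M[R]_n) (alpha beta : R)
  (x : 'cV[R]_n) : 'cV[R]_n :=
  phi (beta^-1 *: ((J + alpha%:M) *m x)).

Definition iterT (R : realType) (n : nat) (J : 'M[R]_n) (alpha beta : R)
  (x0 : 'cV[R]_n) (k : nat) : 'cV[R]_n := iter k (Tmap J alpha beta) x0.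

From HB Require Import structures.
From mathcomp Require Import all_boot all_order all_algebra.
From mathcomp Require Import all_classical all_reals exp.
Import Order.TTheory GRing.Theory Num.Theory.
Local Open Scope ring_scope.

(* Any M >= 1 bounding the starting point bounds all iterates: a row of
   beta^-1 (J + alpha I) has absolute sum at most 1, so the linear step maps
   the cube [-M, M]^n into itself, and the cube root maps [-M, M] into
   [-M, M] as soon as M >= 1. *)

Section CubeRoot.
Variable R : realType.

Lemma normr_cbrt (z : R) : `|cbrt z| = `|z| `^ (3%:R)^-1.
Proof.
rewrite /cbrt normrM normr_sg norm_powR // normr_id.
have [->|_] := eqVneq z 0; last by rewrite mul1r.
by rewrite normr0 mul0r powR0 // invr_eq0 pnatr_eq0.
Qed.

Lemma cbrt_norm_le (M z : R) : 1 <= M -> `|z| <= M -> `|cbrt z| <= M.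
Proof.
move=> M_ge1 zM; rewrite normr_cbrt.
have third_le1 : (3%:R : R)^-1 <= 1 by rewrite invf_le1 ?ltr0n // ler1n.
have [z_ge1|z_lt1] := leP 1 `|z|.
  exact: le_trans (ler1_powR z_ge1 third_le1) zM.
have third_ge0 : (0 : R) <= (3%:R)^-1 by rewrite invr_ge0 ler0n.
apply: le_trans M_ge1; apply: le_trans (ge0_ler_powR third_ge0 _ _ (ltW z_lt1)) _.
- by rewrite nnegrE.
- by rewrite nnegrE ler01.
- by rewrite powR1.
Qed.

End CubeRoot.

Section LinearStep.
Variables (R : realFieldType) (n : nat).

Lemma norm_mulmx_col_le (A : 'M[R]_n) (i : 'I_n) {x : 'cV[R]_n} {M : R} :
  (forall j, `|x j 0| <= M) -> `|(A *m x) i 0| <= (\sum_j `|A i j|) * M.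
Proof.
move=> xM; rewrite mxE mulr_suml; apply: le_trans (ler_norm_sum _ _ _) _.
by apply: ler_sum => j _; rewrite normrM ler_wpM2l.
Qed.

Lemma row_norm_add_scalar (J : 'M[R]_n) (alpha : R) (i : 'I_n) :
  J i i = 0 -> 0 <= alpha ->
  \sum_j `|(J + alpha%:M) i j| = alpha + \sum_(j | j != i) `|J i j|.
Proof.
move=> Jii0 alpha_ge0; rewrite (bigD1 i) //= !mxE Jii0 eqxx mulr1n add0r.
rewrite ger0_norm //; congr (_ + _); apply: eq_bigr => j ji.
by rewrite !mxE eq_sym (negbTE ji) mulr0n addr0.
Qed.

Lemma scaled_row_step_le (A : 'M[R]_n) (x : 'cV[R]_n) (beta M : R) (i : 'I_n) :
  0 <= M -> \sum_j `|A i j| <= beta -> 0 < beta ->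
  (forall j, `|x j 0| <= M) -> `|(beta^-1 *: (A *m x)) i 0| <= M.
Proof.
move=> M_ge0 rowA beta_gt0 xM.
rewrite mxE normrM ger0_norm ?invr_ge0 ?(ltW beta_gt0) // mulrC ler_pdivrMr //.
apply: le_trans (norm_mulmx_col_le A i xM) _.
by rewrite mulrC ler_wpM2l.
Qed.

End LinearStep.

Lemma Tmap_norm_le {R : realType} {n : nat} {J : 'M[R]_n} {alpha beta M : R}
    {x : 'cV[R]_n} :
  (forall i, J i i = 0) -> 0 < alpha ->
  (forall i : 'I_n, alpha + \sum_(j < n | j != i) `|J i j| <= beta) ->
  1 <= M -> (forall j, `|x j 0| <= M) ->
  forall i, `|Tmap J alpha beta x i 0| <= M.
Proof.
move=> Jdiag alpha_gt0 rowJ M_ge1 xM i.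
have rowA : \sum_j `|(J + alpha%:M) i j| <= beta.
  by rewrite row_norm_add_scalar ?(ltW alpha_gt0).
have beta_gt0 : 0 < beta.
  by apply: lt_le_trans (rowJ i); rewrite ltr_wpDr ?sumr_ge0.
rewrite mxE; apply: cbrt_norm_le => //.
by apply: scaled_row_step_le; rewrite ?(le_trans ler01).
Qed.

Theorem propositionS10 (R : realType) (n : nat) (J : 'M[R]_n) (alpha beta : R)
  (x0 : 'cV[R]_n) :
  J^T = J ->
  (forall i, J i i = 0) ->
  0 < alpha ->
  (forall i : 'I_n, alpha + \sum_(j < n | j != i) `|J i j| <= beta) ->
  exists M : R, forall (k : nat) (i : 'I_n), `|iterT J alpha beta x0 k i 0| <= M.
Proof.
(* Symmetry of J matters for the convergence of the iteration, not for its boundedness. *)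
move=> _ Jdiag alpha_gt0 rowJ.
exists (1 + \sum_j `|x0 j 0|).
have M_ge1 : 1 <= 1 + \sum_j `|x0 j 0| by rewrite lerDl sumr_ge0.
elim=> [|k IHk] i.
  by rewrite (bigD1 i) //= addrCA lerDl addr_ge0 ?sumr_ge0.
rewrite /iterT iterS; exact: (Tmap_norm_le Jdiag alpha_gt0 rowJ M_ge1 IHk i).
Qed.
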